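(* Let $T$ be a complete theory with monster model $\mathcal{U}$, $\mu\in\mathfrak{M}_x(\mathcal{U})$, $\nu\in\mathfrak{M}_y(\mathcal{U})$. If $\mu\geq_{\mathbb{E}}\nu$ and $\mu$ is smooth, then $\nu$ is smooth.
   Context: For $C\subseteq\mathcal{U}$, $\mathcal{L}_x(C)$ is the Boolean algebra of formulas in $x$ with parameters from $C$ modulo $T$, embedded in $\mathcal{L}_{xy}(C)$ via $\varphi(x)\mapsto\varphi(x)\wedge y=y$; $\mathfrak{M}_x(C)$ is the set of finitely additive probability measures on $\mathcal{L}_x(C)$. For $\omega\in\mathfrak{M}_{xy}(C)$, $\pi_x(\omega)(\varphi(x))=\omega(\varphi(x)\wedge y=y)$ (similarly $\pi_y$); $\omega|_D$ is restriction. For small $A$, $\mu\geq_{\mathbb{E},A}\nu$ means there is $\lambda\in\mathfrak{M}_{xy}(A)$ with $\pi_x(\lambda)=\mu|_A$ such that every $\omega\in\mathfrak{M}_{xy}(\mathcal{U})$ with $\omega|_A=\lambda$ and $\pi_x(\omega)=\mu$ satisfies $\pi_y(\omega)=\nu$; $\mu\geq_{\mathbb{E}}\nu$ means this for some small $A$. A global measure is smooth over $A$ if it is the unique global measure (in its variables) with its restriction to $A$; it is smooth if smooth over some small $A$. *)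

From mathcomp Require Import all_boot all_order all_algebra.
From mathcomp Require Import classical_sets reals.
From Stdlib Require Import List.
Set Implicit Arguments. Unset Strict Implicit. Unset Printing Implicit Defensive.
Import Order.TTheory GRing.Theory Num.Theory.
Local Open Scope classical_set_scope.
Local Open Scope ring_scope.

Record language := Language {
  Fsym : Type; Fari : Fsym -> nat;
  Rsym : Type; Rari : Rsym -> nat }.

Record interp (L : language) (M : Type) := Interp {
  fint : forall f : Fsym L, ('I_(Fari f) -> M) -> M;
  rint : forall r : Rsym L, ('I_(Rari r) -> M) -> Prop }.

(* Terms and formulas (de Bruijn variables [tvar i]); parameters are
   elements of the parameter type [P] (we take [P := M]). *)
Inductive term (L : language) (P : Type) : Type :=
| tvar : nat -> term L P
| tpar : P -> term L P
| tapp : forall f : Fsym L, ('I_(Fari f) -> term L P) -> term L P.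

Inductive formula (L : language) (P : Type) : Type :=
| feq : term L P -> term L P -> formula L P
| frel : forall r : Rsym L, ('I_(Rari r) -> term L P) -> formula L P
| fnot : formula L P -> formula L P
| fand : formula L P -> formula L P -> formula L P
| fex : formula L P -> formula L P.  (* binds variable 0 *)

Section Semantics.
Variables (L : language) (M : Type) (I : interp L M).

Definition scons (m : M) (e : nat -> M) : nat -> M :=
  fun i => match i with 0 => m | S j => e j end.

Fixpoint teval (e : nat -> M) (t : term L M) : M :=
  match t with
  | tvar i => e i
  | tpar c => c
  | tapp f args => fint I (fun j => teval e (args j))
  end.

Fixpoint sat (e : nat -> M) (phi : formula L M) : Prop :=
  match phi with
  | feq t1 t2 => teval e t1 = teval e t2
  | frel r args => rint I (fun j => teval e (args j))
  | fnot psi => ~ sat e psi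
  | fand psi chi => sat e psi /\ sat e chi
  | fex psi => exists m, sat (scons m e) psi
  end.

Fixpoint tparams_in (C : set M) (t : term L M) : Prop :=
  match t with
  | tvar _ => True
  | tpar c => C c
  | tapp f args => forall j, tparams_in C (args j)
  end.

Fixpoint params_in (C : set M) (phi : formula L M) : Prop :=
  match phi with
  | feq t1 t2 => tparams_in C t1 /\ tparams_in C t2
  | frel r args => forall j, tparams_in C (args j)
  | fnot psi => params_in C psi
  | fand psi chi => params_in C psi /\ params_in C chi
  | fex psi => params_in C psi
  end.

(* The Boolean algebra L_x(C) (x a tuple of n variables): formulas in   *)
(* x with parameters from C modulo T = Th(U), i.e. (since T is the      *)
(* complete theory of U) the C-definable subsets of U^n.                *)

Definition definable (n : nat) (C : set M) (D : set ('I_n -> M)) : Prop :=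
  exists phi : formula L M, params_in C phi /\
    forall e : nat -> M, D (fun i : 'I_n => e (nat_of_ord i)) <-> sat e phi.

(* finitely additive probability measures on L_n(C); a measure is a
   function on sets of n-tuples of which only the values on L_n(C)
   matter (all comparisons below are made on L_n(C) only). *)
Definition fa_prob (R : realType) (n : nat) (C : set M)
    (m : set ('I_n -> M) -> R) : Prop :=
  m setT = 1 /\
  (forall D, definable C D -> 0 <= m D) /\
  (forall D1 D2, definable C D1 -> definable C D2 -> D1 `&` D2 = set0 ->
     m (D1 `|` D2) = m D1 + m D2).

Definition agree (R : realType) (n : nat) (C : set M)
    (m1 m2 : set ('I_n -> M) -> R) : Prop :=
  forall D, definable C D -> m1 D = m2 D.

(* measures in variables x (length n) and y (length k): the tuple xy is
   'I_(n + k) -> M, x being the first n coordinates.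
   pi_x(w)(phi(x)) = w(phi(x) /\ y = y), similarly pi_y. *)
Definition pix (R : realType) (n k : nat) (w : set ('I_(n + k) -> M) -> R)
  : set ('I_n -> M) -> R :=
  fun D => w [set a | D (fun i => a (lshift k i))].

Definition piy (R : realType) (n k : nat) (w : set ('I_(n + k) -> M) -> R)
  : set ('I_k -> M) -> R :=
  fun D => w [set a | D (fun i => a (rshift n i))].

(* Monster model: U is kappa-saturated and strongly kappa-homogeneous,  *)
(* kappa infinite; "small" means of cardinality < kappa.               *)

Definition small (K : Type) (A : set M) : Prop :=
  (exists f : M -> K, forall a b, A a -> A b -> f a = f b -> a = b) /\
  ~ (exists g : K -> M, injective g /\ forall k, A (g k)).

Definition one_var (phi : formula L M) : Prop :=
  forall e e' : nat -> M, e 0%N = e' 0%N -> (sat e phi <-> sat e' phi).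

Definition saturated (K : Type) : Prop :=
  forall (A : set M) (Sigma : set (formula L M)), small K A ->
    (forall phi, Sigma phi -> params_in A phi /\ one_var phi) ->
    (forall s : list (formula L M), (forall phi, In phi s -> Sigma phi) ->
       exists m : M, forall phi, In phi s -> sat (fun _ => m) phi) ->
    exists m : M, forall phi, Sigma phi -> sat (fun _ => m) phi.

Definition automorphism (s : M -> M) : Prop :=
  bijective s /\
  (forall (f : Fsym L) (args : 'I_(Fari f) -> M),
     s (@fint L M I f args) = @fint L M I f (fun j => s (args j))) /\
  (forall (r : Rsym L) (args : 'I_(Rari r) -> M),
     @rint L M I r args <-> @rint L M I r (fun j => s (args j))).

Definition elementary_on (A : set M) (f : M -> M) : Prop :=
  forall (phi : formula L M) (e : nat -> M), params_in set0 phi ->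
    (forall i, A (e i)) -> (sat e phi <-> sat (fun i => f (e i)) phi).

Definition strongly_homogeneous (K : Type) : Prop :=
  forall (A : set M) (f : M -> M), small K A -> elementary_on A f ->
    exists s, automorphism s /\ forall a, A a -> s a = f a.

Definition monster (K : Type) : Prop :=
  inhabited M /\ (exists g : nat -> K, injective g) /\
  saturated K /\ strongly_homogeneous K.

Definition geE_over (R : realType) (n k : nat) (A : set M)
    (mu : set ('I_n -> M) -> R) (nu : set ('I_k -> M) -> R) : Prop :=
  exists lam : set ('I_(n + k) -> M) -> R,
    fa_prob A lam /\ agree A (pix lam) mu /\
    forall w : set ('I_(n + k) -> M) -> R,
      fa_prob setT w -> agree A w lam -> agree setT (pix w) mu ->
      agree setT (piy w) nu.

Definition geE (K : Type) (R : realType) (n k : nat)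
    (mu : set ('I_n -> M) -> R) (nu : set ('I_k -> M) -> R) : Prop :=
  exists A : set M, small K A /\ geE_over A mu nu.

Definition smooth_over (R : realType) (n : nat) (A : set M)
    (mu : set ('I_n -> M) -> R) : Prop :=
  fa_prob setT mu /\
  forall mu' : set ('I_n -> M) -> R,
    fa_prob setT mu' -> agree A mu' mu -> agree setT mu' mu.

Definition smooth (K : Type) (R : realType) (n : nat)
    (mu : set ('I_n -> M) -> R) : Prop :=
  exists A : set M, small K A /\ smooth_over A mu.

End Semantics.

(* Let [lam] over [A] witness [mu >=_{E,A} nu] and let [mu] be smooth over [B].
   A finitely additive probability on the sets definable over [C] (in the variables
   [xy]) and a global one on the cylinders over [x]-definable sets, agreeing where
   both are defined, have a common extension to all sets. In the finite case the two
   families of atoms are made conditionally independent over the atoms of the common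
   subalgebra, which works because the cylinder hull of a [C]-definable set is again
   [C]-definable; an ultralimit then handles all sets at once.
   Amalgamating [lam] with [mu] gives a global [om1] extending [lam] with x-marginal
   [mu], so its y-marginal is [nu]. If [nu'] agrees with [nu] over [A `|` B],
   amalgamating [om1] with [nu'] over [A `|` B] gives [om] extending [lam] whose
   x-marginal agrees with [mu] over [B], hence is [mu] by smoothness; so the
   y-marginal [nu'] of [om] is [nu]. Thus [nu] is smooth over [A `|` B], which is
   small because [2 * kappa = kappa] for every infinite cardinal [kappa]. *)

From Pilot Require Import Defs.
From mathcomp Require Import all_boot all_order all_algebra.
From mathcomp Require Import boolp classical_sets reals lra.
From mathcomp Require Import cardinality filter topology normedtype numfun.
Set Implicit Arguments. Unset Strict Implicit. Unset Printing Implicit Defensive.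
Import GRing.Theory Num.Theory.
Import numFieldNormedType.Exports.
Local Open Scope classical_set_scope.
Local Open Scope ring_scope.

(** * Finitely additive probabilities on algebras of sets *)

Section SetAlgebra.
Variables (Omega : Type) (R : realType).

Definition setalg (B : set (set Omega)) :=
  [/\ B setT, forall X Y, B X -> B Y -> B (X `&` Y) & forall X, B X -> B (~` X)].

Definition fa_prob_on (B : set (set Omega)) (m : set Omega -> R) :=
  [/\ m setT = 1, forall X, B X -> 0 <= m X &
      forall X Y, B X -> B Y -> X `&` Y = set0 -> m (X `|` Y) = m X + m Y].

Fixpoint atoms (l : seq (set Omega)) : seq (set Omega) :=
  if l is a :: l' then [seq a `&` t | t <- atoms l'] ++ [seq ~` a `&` t | t <- atoms l']
  else [:: setT].

Lemma atoms_sep l t a : t \in atoms l -> a \in l -> t `<=` a \/ t `<=` ~` a.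
Proof.
elim: l t => [|b l IH] t //=; rewrite mem_cat in_cons.
case/orP=> /mapP [u u_atoms ->] /orP [/eqP ->|/(IH _ u_atoms) [] sub];
  by [left; exact: subIsetl | right; exact: subIsetl
     | left; exact: subIset (or_intror sub) | right; exact: subIset (or_intror sub)].
Qed.

Variables (B : set (set Omega)) (m : set Omega -> R).
Hypotheses (hB : setalg B) (hm : fa_prob_on B m).

Lemma setalg0 : B set0.
Proof. by case: hB => BT _ BC; rewrite -setCT; exact: BC. Qed.

Lemma atoms_setalg l : (forall a, a \in l -> B a) -> forall t, t \in atoms l -> B t.
Proof.
case: hB => BT BI BC; elim: l => [|a l IH] Bl t /=; first by rewrite inE => /eqP ->.
have Ba : B a by apply: Bl; rewrite mem_head.
have {}IH : forall t, t \in atoms l -> B t.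
  by apply: IH => b bl; apply: Bl; rewrite in_cons bl orbT.
by rewrite mem_cat => /orP [] /mapP [u /IH Bu ->]; apply: BI => //; exact: BC.
Qed.

Lemma fa_prob0 : m set0 = 0.
Proof.
case: hm => _ _ mD; have := mD set0 set0 setalg0 setalg0 (setI0 _).
by rewrite setU0 => H; lra.
Qed.

Lemma fa_prob_splitI X Y : B X -> B Y -> m X = m (X `&` Y) + m (X `&` ~` Y).
Proof.
case: hB => _ BI BC; case: hm => _ _ mD BX BY.
rewrite -mD; [|exact: BI|by apply: BI => //; exact: BC|].
  by rewrite -setIUr setUCr setIT.
by rewrite setIACA setICr setI0.
Qed.

Lemma fa_prob_le X Y : B X -> B Y -> X `<=` Y -> m X <= m Y.
Proof.
case: hB => _ BI BC; case: hm => _ m0 _ BX BY XY.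
rewrite (fa_prob_splitI BY BX) (setIidr XY) lerDl.
by apply: m0; apply: BI => //; exact: BC.
Qed.

Lemma fa_prob_le1 X : B X -> m X <= 1.
Proof. by case: hm => <- _ _ BX; apply: fa_prob_le => //; case: hB. Qed.

Lemma fa_prob_neq0 X : m X != 0 -> X !=set0.
Proof.
by move=> mX; apply/set0P; apply: contra_neq mX => ->; exact: fa_prob0.
Qed.

Lemma fa_prob_sum_atoms l X : (forall a, a \in l -> B a) -> B X ->
  m X = \sum_(t <- atoms l) m (X `&` t).
Proof.
case: hB => _ BI BC; elim: l X => [|a l IH] X Bl BX /=.
  by rewrite big_cons big_nil addr0 setIT.
have Ba : B a by apply: Bl; rewrite mem_head.
have Bl' : forall b, b \in l -> B b by move=> b bl; apply: Bl; rewrite in_cons bl orbT.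
rewrite big_cat !big_map /= -big_split /= (IH X Bl' BX); apply: eq_big_seq => t tl.
have Bt := atoms_setalg Bl' tl.
by rewrite (fa_prob_splitI (BI _ _ BX Bt) Ba) !setIA (setIAC X t) (setIAC X t (~` a)).
Qed.

End SetAlgebra.

Lemma ultra_fmap (J T : Type) (U : set_system J) (f : J -> T) :
  UltraFilter U -> UltraFilter (f @ U).
Proof.
move=> UU; split; first exact: fmap_proper_filter.
move=> G GF sUG; apply/seteqP; split; last exact: sUG.
move=> S GS; have [//|nS] := in_ultra_setVsetC (f @^-1` S) UU.
have GnS : G (~` S) by apply: sUG.
by have /filter_ex [? []] : G (S `&` ~` S) by exact: filterI.
Qed.

Lemma ultra_cvg01 (R : realType) (J : Type) (U : set_system J) (f : J -> R) :
  UltraFilter U -> (forall j, 0 <= f j <= 1) ->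
  exists2 l : R, 0 <= l <= 1 & f @ U --> l.
Proof.
move=> UU f01; have := @segment_compact R 0 1.
rewrite compact_ultra => /(_ (f @ U) (ultra_fmap f UU)) [|l [/= + lim]].
  by apply: (@filterE _ U) => j; rewrite /= in_itv; exact: f01.
by rewrite in_itv => l01; exists l.
Qed.

Lemma fa_prob_compactness (Omega : Type) (R : realType)
    (Q : set (set Omega)) (c : set Omega -> R) :
  (forall l : seq (set Omega), exists mu, fa_prob_on setT mu /\
     forall a, a \in l -> Q a -> mu a = c a) ->
  exists om, fa_prob_on setT om /\ forall a, Q a -> om a = c a.
Proof.
move=> finite_sat; pose mu l := projT1 (cid (finite_sat l)).
have muP l : fa_prob_on setT (mu l) /\ forall a, a \in l -> Q a -> mu l a = c a.
  exact: projT2 (cid (finite_sat l)).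
pose F := filter_from setT (fun l0 : seq (set Omega) =>
  [set l : seq (set Omega) | forall a, a \in l0 -> a \in l]).
have FF : ProperFilter F.
  apply: filter_from_proper => [|l0 _]; last by exists l0.
  apply: filter_from_filter => [|l1 l2 _ _]; first by exists [::].
  exists (l1 ++ l2) => // l sub12.
  by split => a al; apply: sub12; rewrite mem_cat al ?orbT.
have [U [UU FU]] := ultraFilterLemma FF.
have mu01 D l : 0 <= mu l D <= 1.
  have [fa _] := muP l; have alg : setalg [set: set Omega] by [].
  by rewrite (fa_prob_le1 alg fa) // andbT; case: fa => _ + _; apply.
pose om D := s2val (cid2 (ultra_cvg01 UU (mu01 D))).
have om_lim D : mu^~ D @ U --> om D := s2valP' (cid2 (ultra_cvg01 UU (mu01 D))).
have om_near D r : (\forall l \near U, mu l D = r) -> om D = r.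
  move=> near_r; apply: (@cvg_unique _ (@Rhausdorff R) (mu^~ D @ U)).
    exact: om_lim.
  exact: cvg_near_cst.
exists om; split; [split|] => [||X Y _ _ XY0|a Qa].
- by apply: om_near; apply: filterE => l; case: (muP l) => -[].
- by move=> X _; case/andP: (s2valP (cid2 (ultra_cvg01 UU (mu01 X)))).
- apply: (@cvg_unique _ (@Rhausdorff R) (mu^~ (X `|` Y) @ U)); first exact: om_lim.
  have -> : mu^~ (X `|` Y) = (fun l => mu l X + mu l Y).
    by apply/funext => l; case: (muP l) => -[_ _ ->].
  exact: cvgD (om_lim X) (om_lim Y).
- apply: om_near; apply: filterS (FU _ (ex_intro2 _ _ [:: a] I (fun l => id))).
  by move=> l /= sub; apply: (muP l).2 => //; apply: sub; rewrite mem_head.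
Qed.

(** * Amalgamation *)

Lemma indicU_disjoint (T : Type) (R : pzRingType) (A B : set T) :
  A `&` B = set0 -> \1_(A `|` B) = \1_A \+ \1_B :> (T -> R).
Proof.
move=> AB0; apply/funext => x; rewrite /= !indicE in_setU.
have [Ax|nAx] := pselect (A x); have [Bx|nBx] := pselect (B x).
- by have : (A `&` B) x by []; rewrite AB0.
- by rewrite (mem_set Ax) (memNset nBx) addr0.
- by rewrite (mem_set Bx) (memNset nAx) add0r.
- by rewrite (memNset nAx) (memNset nBx) addr0.
Qed.

Lemma mulr_divK_le (R : realFieldType) (x c : R) : 0 <= x <= c -> x * c / c = x.
Proof.
case/andP=> x_ge0 x_le; have [c0|c0] := eqVneq c 0; last by rewrite mulfK.
by rewrite c0 mulr0 mul0r; lra.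
Qed.

Section Amalgamation.
Variables (Omega : Type) (R : realType).
Variables (B1 B2 : set (set Omega)) (m1 m2 : set Omega -> R).
Variable pi : set Omega -> set Omega.
Hypotheses (hB1 : setalg B1) (hB2 : setalg B2).
Hypotheses (hm1 : fa_prob_on B1 m1) (hm2 : fa_prob_on B2 m2).
Hypotheses (pi_B1 : forall X, B1 X -> B1 (pi X)) (pi_B2 : forall X, B1 X -> B2 (pi X)).
Hypothesis sub_pi : forall X, B1 X -> X `<=` pi X.
Hypothesis pi_lift :
  forall X q, B1 X -> pi X q -> exists2 p, X p & forall Y, B2 Y -> Y q -> Y p.
Hypothesis m1_m2 : forall X, B1 X -> B2 X -> m1 X = m2 X.

Section FiniteAmalgam.
Variables (p0 : Omega) (l1 l2 : seq (set Omega)).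
Hypotheses (l1B1 : forall a, a \in l1 -> B1 a) (l2B2 : forall b, b \in l2 -> B2 b).

Let A1 := atoms l1.
Let A2 := atoms l2.
Let G := atoms [seq pi a | a <- A1].

Let A1B1 : forall a, a \in A1 -> B1 a := atoms_setalg hB1 l1B1.
Let A2B2 : forall b, b \in A2 -> B2 b := atoms_setalg hB2 l2B2.

Let piA1B1 c : c \in [seq pi a | a <- A1] -> B1 c.
Proof. by case/mapP=> a /A1B1 B1a ->; exact: pi_B1. Qed.

Let piA1B2 c : c \in [seq pi a | a <- A1] -> B2 c.
Proof. by case/mapP=> a /A1B1 B1a ->; exact: pi_B2. Qed.

Let GB1 : forall g, g \in G -> B1 g := atoms_setalg hB1 piA1B1.
Let GB2 : forall g, g \in G -> B2 g := atoms_setalg hB2 piA1B2.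

Let m1_le a g : a \in A1 -> g \in G -> 0 <= m1 (a `&` g) <= m1 g.
Proof.
move=> aA1 gG; have [_ B1I _] := hB1; have [_ m1_ge0 _] := hm1.
have B1ag : B1 (a `&` g) by apply: B1I; [exact: A1B1|exact: GB1].
by rewrite m1_ge0 // (fa_prob_le hB1 hm1 B1ag (GB1 gG)) //; exact: subIsetr.
Qed.

Let m2_le b g : b \in A2 -> g \in G -> 0 <= m2 (b `&` g) <= m1 g.
Proof.
move=> bA2 gG; have [_ B2I _] := hB2; have [_ m2_ge0 _] := hm2.
have B2bg : B2 (b `&` g) by apply: B2I; [exact: A2B2|exact: GB2].
rewrite (m1_m2 (GB1 gG) (GB2 gG)) m2_ge0 //.
by rewrite (fa_prob_le hB2 hm2 B2bg (GB2 gG)) //; exact: subIsetr.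
Qed.

(* The atoms [A1] and [A2] are made independent conditionally on the atoms [G]
   of the common subalgebra (the weight is [0] when [m1 g = 0], as [0^-1 = 0]). *)
Definition cond_weight a b g := m1 (a `&` g) * m2 (b `&` g) / m1 g.

Lemma cond_weight_ge0 a b g : a \in A1 -> b \in A2 -> g \in G -> 0 <= cond_weight a b g.
Proof.
move=> aA1 bA2 gG; case/andP: (m1_le aA1 gG) => ag_ge0 ag_le.
case/andP: (m2_le bA2 gG) => bg_ge0 _.
by rewrite /cond_weight !mulr_ge0 // invr_ge0; lra.
Qed.

Lemma cond_weight_marginal1 a : a \in A1 ->
  \sum_(b <- A2) \sum_(g <- G) cond_weight a b g = m1 a.
Proof.
move=> aA1; rewrite exchange_big /= (fa_prob_sum_atoms hB1 hm1 piA1B1 (A1B1 aA1)).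
apply: eq_big_seq => g gG; rewrite -mulr_suml -mulr_sumr.
have -> : \sum_(b <- A2) m2 (b `&` g) = m1 g.
  rewrite (m1_m2 (GB1 gG) (GB2 gG)) (fa_prob_sum_atoms hB2 hm2 l2B2 (GB2 gG)).
  by apply: eq_bigr => b _; rewrite setIC.
exact/mulr_divK_le/m1_le.
Qed.

Lemma cond_weight_marginal2 b : b \in A2 ->
  \sum_(a <- A1) \sum_(g <- G) cond_weight a b g = m2 b.
Proof.
move=> bA2; rewrite exchange_big /= (fa_prob_sum_atoms hB2 hm2 piA1B2 (A2B2 bA2)).
apply: eq_big_seq => g gG; rewrite -!mulr_suml.
have -> : \sum_(a <- A1) m1 (a `&` g) = m1 g.
  rewrite (fa_prob_sum_atoms hB1 hm1 l1B1 (GB1 gG)).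
  by apply: eq_bigr => a _; rewrite setIC.
by rewrite [m1 g * _]mulrC; exact/mulr_divK_le/m2_le.
Qed.

(* This is where [pi] is used: [g] lies inside [pi a], so a point of [b `&` g]
   lifts to a point of [a] with the same [B2]-type. *)
Lemma cond_weight_neq0 a b g : a \in A1 -> b \in A2 -> g \in G ->
  cond_weight a b g != 0 -> a `&` b `&` g !=set0.
Proof.
move=> aA1 bA2 gG; rewrite !mulf_eq0 !negb_or => /andP [/andP [ag0 bg0] _].
have [z [az gz]] := fa_prob_neq0 hB1 hm1 ag0.
have [q [bq gq]] := fa_prob_neq0 hB2 hm2 bg0.
have g_pi : g `<=` pi a.
  have /(atoms_sep gG) [//|g_npi] : pi a \in [seq pi a | a <- A1] by exact: map_f.
  by have := g_npi z gz; have := sub_pi (A1B1 aA1) az.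
have [p ap q_p] := pi_lift (A1B1 aA1) (g_pi q gq).
exists p; split; [split|] => //; apply: q_p => //; [exact: A2B2 | exact: GB2].
Qed.

Let point a b g := @xget {classic Omega} p0 (a `&` b `&` g).

Definition cond_mix D :=
  \sum_(a <- A1) \sum_(b <- A2) \sum_(g <- G) cond_weight a b g * \1_D (point a b g).

Let point_in a b g : a \in A1 -> b \in A2 -> g \in G ->
  cond_weight a b g != 0 -> (a `&` b `&` g) (point a b g).
Proof. by move=> aA1 bA2 gG w0; apply: xgetPex; exact: cond_weight_neq0. Qed.

Let cond_weight_indic1 D a b g : a \in A1 -> b \in A2 -> g \in G ->
  a `&` b `&` g `<=` D -> cond_weight a b g * \1_D (point a b g) = cond_weight a b g.
Proof.
move=> aA1 bA2 gG sub; have [->|w0] := eqVneq (cond_weight a b g) 0; first by rewrite mul0r.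
by rewrite indicE mem_set ?mulr1 //; apply/sub/point_in.
Qed.

Let cond_weight_indic0 D a b g : a \in A1 -> b \in A2 -> g \in G ->
  a `&` b `&` g `<=` ~` D -> cond_weight a b g * \1_D (point a b g) = 0.
Proof.
move=> aA1 bA2 gG sub; have [->|w0] := eqVneq (cond_weight a b g) 0; first by rewrite mul0r.
by rewrite indicE memNset ?mulr0 //; apply/sub/point_in.
Qed.

Lemma cond_mix_m1 X : B1 X -> (forall a, a \in A1 -> a `<=` X \/ a `<=` ~` X) ->
  cond_mix X = m1 X.
Proof.
move=> B1X sep; rewrite (fa_prob_sum_atoms hB1 hm1 l1B1 B1X).
apply: eq_big_seq => a aA1; have [aX|aNX] := sep a aA1.
  rewrite (setIidr aX) -cond_weight_marginal1 //.
  apply: eq_big_seq => b bA2; apply: eq_big_seq => g gG.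
  by apply: cond_weight_indic1 => // p [[/aX]].
have -> : X `&` a = set0 by apply/seteqP; split => p // [Xp /aNX].
rewrite (fa_prob0 hB1 hm1) big1_seq // => b bA2; rewrite big1_seq // => g gG.
by apply: cond_weight_indic0 => // p [[/aNX]].
Qed.

Lemma cond_mix_m2 X : B2 X -> (forall b, b \in A2 -> b `<=` X \/ b `<=` ~` X) ->
  cond_mix X = m2 X.
Proof.
move=> B2X sep; rewrite /cond_mix exchange_big (fa_prob_sum_atoms hB2 hm2 l2B2 B2X) /=.
apply: eq_big_seq => b bA2; have [bX|bNX] := sep b bA2.
  rewrite (setIidr bX) -cond_weight_marginal2 //.
  apply: eq_big_seq => a aA1; apply: eq_big_seq => g gG.
  by apply: cond_weight_indic1 => // p [[_ /bX]].
have -> : X `&` b = set0 by apply/seteqP; split => p // [Xp /bNX].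
rewrite (fa_prob0 hB2 hm2) big1_seq // => a aA1; rewrite big1_seq // => g gG.
by apply: cond_weight_indic0 => // p [[_ /bNX]].
Qed.

Lemma fa_prob_cond_mix : fa_prob_on setT cond_mix.
Proof.
split=> [|X _|X Y _ _ XY0].
- have [B1T _ _] := hB1; have [m1T _ _] := hm1.
  by rewrite cond_mix_m1 // => a _; left.
- rewrite /cond_mix big_seq sumr_ge0 // => a aA1; rewrite big_seq sumr_ge0 // => b bA2.
  by rewrite big_seq sumr_ge0 // => g gG; rewrite mulr_ge0 ?cond_weight_ge0.
- rewrite /cond_mix indicU_disjoint // -big_split; apply: eq_bigr => a _.
  rewrite -big_split; apply: eq_bigr => b _; rewrite -big_split; apply: eq_bigr => g _.
  by rewrite /= mulrDr.
Qed.

End FiniteAmalgam.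

Lemma finite_amalgam (l1 l2 : seq (set Omega)) :
  (forall a, a \in l1 -> B1 a) -> (forall b, b \in l2 -> B2 b) ->
  exists mu, [/\ fa_prob_on setT mu, forall a, a \in l1 -> mu a = m1 a &
                                     forall b, b \in l2 -> mu b = m2 b].
Proof.
move=> l1B1 l2B2; have [m1T _ _] := hm1.
have /(fa_prob_neq0 hB1 hm1) [p0 _] : m1 setT != 0 by rewrite m1T oner_neq0.
exists (cond_mix p0 l1 l2); split => [|a al1|b bl2].
- exact: fa_prob_cond_mix.
- by apply: cond_mix_m1 => //; [exact: l1B1 | move=> t /atoms_sep; apply].
- by apply: cond_mix_m2 => //; [exact: l2B2 | move=> t /atoms_sep; apply].
Qed.

Theorem fa_prob_amalgam : exists om,
  [/\ fa_prob_on setT om, forall X, B1 X -> om X = m1 X & forall X, B2 X -> om X = m2 X].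
Proof.
pose c X := if pselect (B1 X) then m1 X else m2 X.
have [om [fa_om om_c]] : exists om, fa_prob_on setT om /\ forall X, (B1 `|` B2) X -> om X = c X.
  apply: fa_prob_compactness => l.
  pose l1 := [seq a <- l | `[< B1 a >]]; pose l2 := [seq b <- l | `[< B2 b >]].
  have l1B1 a : a \in l1 -> B1 a by rewrite mem_filter => /andP [/asboolP].
  have l2B2 b : b \in l2 -> B2 b by rewrite mem_filter => /andP [/asboolP].
  have [mu [fa_mu mu1 mu2]] := finite_amalgam l1B1 l2B2.
  exists mu; split => // X Xl B12X; rewrite /c; case: pselect => [B1X|nB1X].
    by apply: mu1; rewrite mem_filter Xl andbT; exact/asboolP.
  have B2X : B2 X by case: B12X.
  by apply: mu2; rewrite mem_filter Xl andbT; exact/asboolP.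
exists om; split => // X BX; rewrite om_c /c; [|by left| |by right].
  by case: pselect.
by case: pselect => // B1X; exact: m1_m2.
Qed.
End Amalgamation.

(** * Formulas and definable sets *)

Section Syntax.
Variables (L : language) (M : Type) (I : interp L M).

Fixpoint trename (rho : nat -> nat) (t : term L M) : term L M :=
  match t with
  | tvar i => @tvar L M (rho i)
  | tpar c => @tpar L M c
  | tapp f args => @tapp L M f (fun j => trename rho (args j))
  end.

Definition uprename (rho : nat -> nat) (i : nat) : nat :=
  if i is j.+1 then (rho j).+1 else 0.

Fixpoint frename (rho : nat -> nat) (phi : formula L M) : formula L M :=
  match phi with
  | feq t1 t2 => feq (trename rho t1) (trename rho t2)
  | Defs.frel r args => @Defs.frel L M r (fun j => trename rho (args j))
  | fnot psi => fnot (frename rho psi)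
  | fand psi chi => fand (frename rho psi) (frename rho chi)
  | fex psi => fex (frename (uprename rho) psi)
  end.

Lemma teval_rename rho e t : teval I e (trename rho t) = teval I (e \o rho) t.
Proof. by elim: t => //= f args IH; congr (fint _ _); apply/funext => j. Qed.

Lemma sat_rename rho e phi : sat I e (frename rho phi) <-> sat I (e \o rho) phi.
Proof.
elim: phi rho e => [t1 t2|r args|psi IH|psi IH chi IH'|psi IH] rho e /=.
- by rewrite !teval_rename.
- by under eq_fun do rewrite teval_rename.
- by rewrite IH.
- by rewrite IH IH'.
- have scons_up m : scons m e \o uprename rho = scons m (e \o rho) by apply/funext => -[].
  by split=> -[m]; [rewrite IH scons_up | rewrite -scons_up -IH]; exists m.
Qed.

Lemma tparams_rename (C : set M) rho (t : term L M) :
  tparams_in C t -> tparams_in C (trename rho t).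
Proof. by elim: t => //= f args IH Cargs j; apply: IH. Qed.

Lemma params_rename (C : set M) rho (phi : formula L M) :
  params_in C phi -> params_in C (frename rho phi).
Proof.
elim: phi rho => [t1 t2|r args|psi IH|psi IH chi IH'|psi IH] rho /=.
- by case; split; exact: tparams_rename.
- by move=> Cargs j; exact: tparams_rename.
- exact: IH.
- by case; split; [exact: IH | exact: IH'].
- exact: IH.
Qed.

Lemma tparams_mono (C C' : set M) (t : term L M) :
  C `<=` C' -> tparams_in C t -> tparams_in C' t.
Proof.
move=> CC'; elim: t => [//|c|f args IH] /=; first exact: CC'.
by move=> Cargs j; apply: IH.
Qed.

Lemma params_mono (C C' : set M) (phi : formula L M) :
  C `<=` C' -> params_in C phi -> params_in C' phi.
Proof.
move=> CC'; elim: phi => [t1 t2|r args|psi IH|psi IH chi IH'|psi IH] //=.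
- by case; split; exact: tparams_mono CC' _.
- by move=> Cargs j; exact: tparams_mono CC' _.
- by case; split; [exact: IH | exact: IH'].
Qed.

Definition fexv (j : nat) (phi : formula L M) : formula L M :=
  fex (frename (fun i => if i == j then 0 else i.+1) phi).

Definition fexs (l : seq nat) (phi : formula L M) : formula L M := foldr fexv phi l.

Lemma sat_fexs e l phi : sat I e (fexs l phi) <->
  exists e', (forall i, i \notin l -> e' i = e i) /\ sat I e' phi.
Proof.
elim: l e => [|j l IH] e /=.
  split=> [|[e' [e'e]]]; first by exists e.
  by have -> : e' = e by apply/funext => i; exact: e'e.
rewrite /fexv /=; split.
  case=> m; rewrite sat_rename => /IH [e' [e'e sat_e']]; exists e'; split => // i.
  by rewrite in_cons negb_or => /andP [/negbTE ij il]; rewrite e'e //= ij.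
case=> e' [e'e sat_e']; exists (e' j); rewrite sat_rename; apply/IH.
exists e'; split => // i il /=; have [->//|ij] := eqVneq i j.
by apply: e'e; rewrite in_cons negb_or ij.
Qed.

Lemma params_fexs (C : set M) l (phi : formula L M) :
  params_in C phi -> params_in C (fexs l phi).
Proof. by elim: l => //= j l IH Cphi; apply/params_rename/IH. Qed.

Section Definable.
Variable N : nat.
Implicit Types (C : set M) (X Y : set ('I_N -> M)).

Lemma definable_mono C C' X : C `<=` C' -> definable I C X -> definable I C' X.
Proof. by move=> CC' [phi [Cphi phiP]]; exists phi; split => //; exact: params_mono Cphi. Qed.

Lemma setalg_definable C : setalg (definable I C (n := N)).
Proof.
split => [|X Y [phi [Cphi phiP]] [psi [Cpsi psiP]]|X [phi [Cphi phiP]]].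
- by exists (feq (@tvar L M 0) (@tvar L M 0)).
- by exists (fand phi psi); split => // e /=; rewrite -phiP -psiP.
- by exists (fnot phi); split => // e /=; rewrite -phiP.
Qed.

End Definable.
End Syntax.

(** * Coordinate restrictions *)

Section Restriction.
Variables (L : language) (M : Type) (I : interp L M) (m N : nat) (s : 'I_m -> 'I_N).
Hypothesis s_inj : injective s.

Definition restr (a : 'I_N -> M) : 'I_m -> M := a \o s.

Lemma restr_surj (x0 : M) : restr @` setT = setT.
Proof.
apply/seteqP; split => // d _.
exists (fun j => if [pick i | s i == j] is Some i then d i else x0) => //.
apply/funext => i; rewrite /restr /=.
by case: (pickP (fun i' => s i' == s i)) => [i' /eqP/s_inj -> //|/(_ i)]; rewrite eqxx.
Qed.

Lemma definable_restr_preimage (C : set M) (D : set ('I_m -> M)) :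
  definable I C D -> definable I C (restr @^-1` D).
Proof.
case=> phi [Cphi phiP]; pose rho j := if insub j is Some i then val (s i) else j.
exists (frename rho phi); split; first exact: params_rename.
move=> e; rewrite sat_rename -phiP /preimage /restr /=.
suff -> : (fun i : 'I_m => (e \o rho) i) = (fun i => e (s i)) by [].
apply/funext => i /=; rewrite /rho.
by case: insubP => [i' _ /val_inj -> //|]; rewrite ltn_ord.
Qed.

(* The coordinates outside the range of [s] are quantified away, and those
   inside it are renamed to the corresponding coordinates of ['I_m]. *)
Lemma definable_restr_image (C : set M) (X : set ('I_N -> M)) :
  definable I C X -> definable I C (restr @` X).
Proof.
case=> phi [Cphi phiP].
pose rho j := if [pick i | val (s i) == j] is Some i then val i else j.
have rho_s i : rho (s i) = i.
  by rewrite /rho; case: pickP => [i' /eqP/val_inj/s_inj -> //|/(_ i)]; rewrite eqxx.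
pose l := [seq j <- iota 0 N | ~~ [exists i, val (s i) == j]].
have s_notin i : val (s i) \notin l.
  by rewrite mem_filter negb_and negbK; apply/orP; left; apply/existsP; exists i.
exists (frename rho (fexs l phi)); split; first exact/params_rename/params_fexs.
move=> e; rewrite sat_rename sat_fexs; split.
  case=> a Xa ae; exists (fun j => if insub j is Some o then a o else e (rho j)); split.
    move=> j; case: insubP => [o _ <- /= | //].
    rewrite mem_filter mem_iota add0n ltn_ord /= andbT negbK => /existsP [i /eqP/val_inj <-].
    by rewrite rho_s -(congr1 (@^~ i) ae).
  apply/phiP; rewrite (_ : (fun i : 'I_N => _) = a) //.
  by apply/funext => i; rewrite /= valK.
case=> e' [e'e sat_e']; exists (fun i : 'I_N => e' i); first exact/phiP.
by apply/funext => i; rewrite /restr /= e'e ?s_notin //= rho_s.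
Qed.

Definition cylinder : set (set ('I_N -> M)) :=
  [set X | exists2 D, definable I setT D & X = restr @^-1` D].

Lemma setalg_cylinder : setalg cylinder.
Proof.
have [defT defI defC] := setalg_definable I m setT.
split=> [|_ _ [D dD ->] [D' dD' ->]|_ [D dD ->]]; first by exists setT.
  by exists (D `&` D'); [exact: defI | rewrite preimage_setI].
by exists (~` D); [exact: defC | rewrite preimage_setC].
Qed.

End Restriction.

Section Measures.
Variables (L : language) (M : Type) (I : interp L M) (R : realType).

Lemma fa_probP n (C : set M) (mu : set ('I_n -> M) -> R) :
  fa_prob I C mu <-> fa_prob_on (definable I C) mu.
Proof. by split => [[? [? ?]]|[? ? ?]]. Qed.

Lemma fa_prob_sub n (C C' : set M) (mu : set ('I_n -> M) -> R) :
  C `<=` C' -> fa_prob I C' mu -> fa_prob I C mu.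
Proof.
move=> CC' /fa_probP [mu1 mu_ge0 muD]; apply/fa_probP; split => // [X|X Y] dX.
  exact/mu_ge0/(definable_mono CC').
by move=> dY; apply: muD; exact: definable_mono CC' _.
Qed.

Lemma fa_prob_on_setT n (C : set M) (mu : set ('I_n -> M) -> R) :
  fa_prob_on setT mu -> fa_prob I C mu.
Proof.
case=> mu1 mu_ge0 muD; apply/fa_probP.
by split=> // [X _|X Y _ _]; [exact: mu_ge0 | exact: muD].
Qed.

Lemma fa_prob_restr m N (s : 'I_m -> 'I_N) (C : set M) (mu : set ('I_N -> M) -> R) :
  fa_prob I C mu -> fa_prob I C (fun D => mu (restr s @^-1` D)).
Proof.
move=> /fa_probP [mu1 mu_ge0 muD]; apply/fa_probP; split => // [X|X Y] dX.
  exact/mu_ge0/definable_restr_preimage.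
move=> dY XY0; rewrite preimage_setU muD //.
- exact: definable_restr_preimage.
- exact: definable_restr_preimage.
- by rewrite -preimage_setI XY0 preimage_set0.
Qed.

Lemma fa_prob_cylinder (x0 : M) m N (s : 'I_m -> 'I_N) (mu : set ('I_m -> M) -> R) :
  injective s -> fa_prob I setT mu -> fa_prob_on (cylinder I s) (fun X => mu (restr s @` X)).
Proof.
move=> s_inj /fa_probP [mu1 mu_ge0 muD].
have restrK D : restr s @` (restr s @^-1` D) = D := image_preimage _ (restr_surj s_inj x0).
split=> [|_ [D dD ->]|_ _ [D dD ->] [D' dD' ->] DD'0].
- by rewrite (restr_surj s_inj x0).
- by rewrite restrK; exact: mu_ge0.
rewrite -preimage_setU !restrK muD //.
by rewrite -(restrK (D `&` D')) preimage_setI DD'0 image_set0.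
Qed.

(* The restriction map [restr s] plays the role of [pi_x] (or [pi_y]); [om] is the
   amalgam of [lam] with the pull-back of [mu] to the cylinders. *)
Lemma fa_prob_extend_restr (x0 : M) m N (s : 'I_m -> 'I_N) (C : set M)
    (lam : set ('I_N -> M) -> R) (mu : set ('I_m -> M) -> R) :
  injective s -> fa_prob I C lam -> fa_prob I setT mu ->
  agree I C (fun D => lam (restr s @^-1` D)) mu ->
  exists om, [/\ fa_prob I setT om, agree I C om lam &
                 agree I setT (fun D => om (restr s @^-1` D)) mu].
Proof.
move=> s_inj fa_lam fa_mu lam_mu.
have restrK D : restr s @` (restr s @^-1` D) = D := image_preimage _ (restr_surj s_inj x0).
pose hull (X : set ('I_N -> M)) := restr s @^-1` (restr s @` X).
have hull_C X : definable I C X -> definable I C (hull X).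
  by move=> dX; exact/definable_restr_preimage/definable_restr_image.
have hull_cyl X : definable I C X -> cylinder I s (hull X).
  move=> dX; exists (restr s @` X) => //.
  exact/(definable_mono (subsetT C))/definable_restr_image.
have sub_hull X : definable I C X -> X `<=` hull X by move=> _; exact: preimage_image.
have hull_lift X q : definable I C X -> hull X q ->
    exists2 p, X p & forall Y, cylinder I s Y -> Y q -> Y p.
  by move=> _ [p Xp pq]; exists p => // _ [D _ ->]; rewrite /preimage /= pq.
have lam_cyl X : definable I C X -> cylinder I s X -> lam X = mu (restr s @` X).
  move=> dX [D _ XD]; rewrite XD restrK -lam_mu //.
  by rewrite -(restrK D) -XD; exact: definable_restr_image.
have [om [fa_om om_lam om_mu]] := fa_prob_amalgam (setalg_definable I N C)
  (setalg_cylinder I s) (proj1 (fa_probP _ _) fa_lam) (fa_prob_cylinder x0 s_inj fa_mu)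
  hull_C hull_cyl sub_hull hull_lift lam_cyl.
exists om; split=> [|X dX|D dD]; first exact: fa_prob_on_setT.
  exact: om_lam.
by rewrite om_mu ?restrK //; exists D.
Qed.
End Measures.

(** * Cardinal arithmetic *)

Section Cardinals.
Local Open Scope card_scope.

Definition embedding (T U : Type) (X : set T) (Y : set U) (f : T -> U) :=
  (forall x, X x -> Y (f x)) /\ forall x y, X x -> X y -> f x = f y -> x = y.

Lemma infinite_setP (T : Type) (X : set T) :
  infinite_set X <-> exists h : nat -> T, injective h /\ forall n, X (h n).
Proof.
rewrite infiniteP; split => [|[h [h_inj hX]]]; last first.
  have /card_eqPle [_ le_h] : h @` setT #= [set: nat].
    by apply: inj_card_eq => i j _ _ /h_inj.
  by apply: card_le_trans le_h (subset_card_le _) => _ [n _ <-].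
elim/Ppointed: T X => T X.
  by rewrite emptyE => /eqP nat0; have : [set: nat] 0%N by []; rewrite nat0.
move=> /pcard_leP/injfunPex [h hX h_inj]; exists h; split.
  by move=> i j; apply: h_inj; rewrite ?in_setE.
by move=> n; apply: hX.
Qed.

Lemma embedding_comp (T U V : Type) (X : set T) (Y : set U) (Z : set V) f g :
  embedding X Y f -> embedding Y Z g -> embedding X Z (g \o f).
Proof.
move=> [fXY f_inj] [gYZ g_inj]; split => [x Xx|x y Xx Xy /g_inj]; first exact/gYZ/fXY.
by move=> /(_ (fXY _ Xx) (fXY _ Xy)); apply: f_inj.
Qed.

Lemma graph_fun (T U : Type) (u0 : U) (X : set T) (G : set (T * U)) :
  (forall x, X x -> exists y, G (x, y)) -> exists f, forall x, X x -> G (x, f x).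
Proof.
move=> Gtot; suff [f fP] : {f : T -> U & forall x, X x -> G (x, f x)} by exists f.
apply: (@choice _ _ (fun x y => X x -> G (x, y))) => x.
by have [/Gtot [y Gxy]|nXx] := pselect (X x); [exists y | exists u0 => /nXx].
Qed.

Section Comparability.
Variables (T : Type) (t0 : T).

Definition partial_injection (X Y : set T) (G : set (T * T)) :=
  [/\ forall p, G p -> X p.1 /\ Y p.2,
      forall x y y', G (x, y) -> G (x, y') -> y = y' &
      forall x x' y, G (x, y) -> G (x', y) -> x = x'].

Lemma maximal_partial_injection (X Y : set T) : exists G,
  partial_injection X Y G /\ forall H, G `<` H -> ~ partial_injection X Y H.
Proof.
apply: Zorn_bigcup => F FP Ftot; split.
- by move=> p [G FG Gp]; have [GXY _ _] := FP G FG; exact: GXY.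
- move=> x y y' [G1 F1 G1xy] [G2 F2 G2xy']; have [G1G2|G2G1] := Ftot _ _ F1 F2.
    by have [_ G_fun _] := FP G2 F2; exact: G_fun (G1G2 _ G1xy) G2xy'.
  by have [_ G_fun _] := FP G1 F1; exact: G_fun G1xy (G2G1 _ G2xy').
- move=> x x' y [G1 F1 G1xy] [G2 F2 G2x'y]; have [G1G2|G2G1] := Ftot _ _ F1 F2.
    by have [_ _ G_inj] := FP G2 F2; exact: G_inj (G1G2 _ G1xy) G2x'y.
  by have [_ _ G_inj] := FP G1 F1; exact: G_inj G1xy (G2G1 _ G2x'y).
Qed.

Lemma embedding_total (X Y : set T) :
  (exists f, embedding X Y f) \/ (exists g, embedding Y X g).
Proof.
have [G [[GXY G_fun G_inj] Gmax]] := maximal_partial_injection X Y.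
have [Gtot|/existsPNP [x0 Xx0 nx0]] := pselect (forall x, X x -> exists y, G (x, y)).
  left; have [f fG] := graph_fun t0 Gtot.
  exists f; split=> [x /fG /GXY [] //|x y Xx Xy fxy].
  by apply: (G_inj x y (f x)); [exact: fG | rewrite fxy; exact: fG].
have [Gsurj|/existsPNP [y0 Yy0 ny0]] := pselect (forall y, Y y -> exists x, G (x, y)).
  right; have [g gG] := graph_fun t0 (G := [set p | G (p.2, p.1)]) Gsurj.
  exists g; split => [y /gG /GXY []//|y y' Yy Yy' gyy'].
  by apply: (G_fun (g y) y y'); [exact: gG | rewrite gyy'; exact: gG].
exfalso; apply: (Gmax (G `|` [set (x0, y0)])).
  split=> [p Gp|/(_ (x0, y0) (or_intror erefl)) Gx0y0]; first by left.
  by apply: nx0; exists y0.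
split=> [p [/GXY //|->] //|x y y'|x x' y].
- case=> [Gxy|[ex ey]] [Gxy'|[ex' ey']]; first exact: G_fun Gxy Gxy'.
  + by case: nx0; exists y; rewrite -ex'.
  + by case: nx0; exists y'; rewrite -ex.
  + by rewrite ey ey'.
- case=> [Gxy|[ex ey]] [Gx'y|[ex' ey']]; first exact: G_inj Gxy Gx'y.
  + by case: ny0; exists x; rewrite -ey'.
  + by case: ny0; exists x'; rewrite -ey.
  + by rewrite ex ex'.
Qed.
End Comparability.

Section Doubling.
Variables (T : Type) (t0 : T).

Definition rng (G : set ((bool * T) * T)) : set T := [set y | exists p, G (p, y)].

(* [G] is the graph of a bijection from [bool * rng G] onto [rng G], inside [X]. *)
Definition doubling_graph (X : set T) (G : set ((bool * T) * T)) :=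
  [/\ forall b x y, G ((b, x), y) -> X y /\ rng G x,
      forall b x, rng G x -> exists y, G ((b, x), y),
      forall p y y', G (p, y) -> G (p, y') -> y = y' &
      forall p p' y, G (p, y) -> G (p', y) -> p = p'].

Lemma doubling_graph_setU X G H : doubling_graph X G -> doubling_graph X H ->
  (forall y, rng G y -> rng H y -> False) -> doubling_graph X (G `|` H).
Proof.
move=> [G_dom G_tot G_fun G_inj] [H_dom H_tot H_fun H_inj] disj.
have rngU y : rng (G `|` H) y <-> rng G y \/ rng H y.
  split=> [[p [Gp|Hp]]|[[p Gp]|[p Hp]]].
  - by left; exists p.
  - by right; exists p.
  - by exists p; left.
  - by exists p; right.
split.
- move=> b x y [/G_dom|/H_dom] [Xy x_rng]; split => //; apply/rngU; by [left|right].
- move=> b x /rngU [/(G_tot b)|/(H_tot b)] [y Gy]; exists y; by [left|right].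
- move=> [b x] y y' [Gy|Hy] [Gy'|Hy']; [exact: G_fun Gy Gy'| | |exact: H_fun Hy Hy'].
    by case: (disj x); [exact: (G_dom _ _ _ Gy).2 | exact: (H_dom _ _ _ Hy').2].
  by case: (disj x); [exact: (G_dom _ _ _ Gy').2 | exact: (H_dom _ _ _ Hy).2].
- move=> p p' y [Gp|Hp] [Gp'|Hp']; [exact: G_inj Gp Gp'| | |exact: H_inj Hp Hp'].
    by case: (disj y); [exists p | exists p'].
  by case: (disj y); [exists p' | exists p].
Qed.

Lemma doubling_graph_nat X (h : nat -> T) : injective h -> (forall n, X (h n)) ->
  doubling_graph X [set q | exists (b : bool) n, q = ((b, h n), h (n.*2 + b)%N)].
Proof.
move=> h_inj hX; set H := [set q | _].
have rngH y : rng H y <-> exists n, y = h n.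
  split=> [[_ [b [n [_ ->]]]]|[n ->]]; first by exists (n.*2 + b)%N.
  by exists (odd n, h n./2), (odd n), n./2; rewrite addnC odd_double_half.
split.
- move=> b x y [b' [n [_ -> ->]]]; split; first exact: hX.
  by apply/rngH; exists n.
- by move=> b x /rngH [n ->]; exists (h (n.*2 + b)%N), b, n.
- move=> p y y' [b [n [-> ->]]] [b' [n' [eb /h_inj en ->]]].
  by rewrite eb en.
- move=> p p' y [b [n [-> ->]]] [b' [n' [-> /h_inj E]]].
  have eb : b = b' by move: (congr1 odd E); rewrite !oddD !odd_double !oddb.
  by move: E; rewrite eb => /addIn/(can_inj doubleK) ->.
Qed.

Lemma doubling_graph_image X Y G (phi : T -> T) :
  doubling_graph X G -> embedding (rng G) Y phi ->
  doubling_graph Y [set q | exists b x y, G ((b, x), y) /\ q = ((b, phi x), phi y)].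
Proof.
move=> [G_dom G_tot G_fun G_inj] [phiY phi_inj]; set H := [set q | _].
have rngH z : rng H z <-> exists2 y, rng G y & z = phi y.
  split=> [[_ [b [x [y [Gy [_ ->]]]]]]|[y [[b x] Gy] ->]].
    by exists y => //; exists (b, x).
  by exists (b, phi x), b, x, y.
split.
- move=> b _ _ [b0 [x [y [Gy [_ -> ->]]]]]; split; first by apply: phiY; exists (b0, x).
  by apply/rngH; exists x => //; exact: (G_dom _ _ _ Gy).2.
- move=> b _ /rngH [x x_rng ->]; have [y Gy] := G_tot b x x_rng.
  by exists (phi y), b, x, y.
- move=> p _ _ [b [x [y [Gy [-> ->]]]]] [b' [x' [y' [Gy' [eb exx' ->]]]]].
  have {}exx' := phi_inj x x' (G_dom _ _ _ Gy).2 (G_dom _ _ _ Gy').2 exx'.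
  by rewrite (G_fun _ _ _ Gy (_ : G ((b, x), y'))) // eb exx'.
- move=> _ _ z [b [x [y [Gy [-> ->]]]]] [b' [x' [y' [Gy' [-> eyy']]]]].
  have {}eyy' := phi_inj y y' (ex_intro _ _ Gy) (ex_intro _ _ Gy') eyy'.
  by rewrite eyy' in Gy; case: (G_inj _ _ _ Gy Gy') => -> ->.
Qed.

Lemma maximal_doubling_graph X : exists G,
  doubling_graph X G /\ forall H, G `<` H -> ~ doubling_graph X H.
Proof.
apply: Zorn_bigcup => F FP Ftot.
have rngU G y : F G -> rng G y -> rng (\bigcup_(K in F) K) y.
  by move=> FG [p Gp]; exists p, G.
split.
- move=> b x y [G FG Gy]; have [G_dom _ _ _] := FP G FG.
  by have [Xy x_rng] := G_dom _ _ _ Gy; split => //; exact: rngU x_rng.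
- move=> b x [p [G FG Gp]]; have [_ G_tot _ _] := FP G FG.
  by have [y Gy] := G_tot b x (ex_intro _ p Gp); exists y, G.
- move=> p y y' [G1 F1 G1y] [G2 F2 G2y']; have [G12|G21] := Ftot _ _ F1 F2.
    by have [_ _ G_fun _] := FP G2 F2; exact: G_fun (G12 _ G1y) G2y'.
  by have [_ _ G_fun _] := FP G1 F1; exact: G_fun G1y (G21 _ G2y').
- move=> p p' y [G1 F1 G1p] [G2 F2 G2p']; have [G12|G21] := Ftot _ _ F1 F2.
    by have [_ _ _ G_inj] := FP G2 F2; exact: G_inj (G12 _ G1p) G2p'.
  by have [_ _ _ G_inj] := FP G1 F1; exact: G_inj G1p (G21 _ G2p').
Qed.

Lemma maximal_doubling_graph_meet X G H :
  doubling_graph X G -> (forall K, G `<` K -> ~ doubling_graph X K) ->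
  doubling_graph X H -> rng H !=set0 -> exists y, rng G y /\ rng H y.
Proof.
move=> dG Gmax dH [y0 [p0 Hp0]]; apply: contrapT => disj.
apply: (Gmax (G `|` H)); last by apply: doubling_graph_setU => // y Gy Hy; apply: disj; exists y.
split=> [q Gq|/(_ (p0, y0) (or_intror Hp0)) Gp0]; first by left.
by apply: disj; exists y0; split; exists p0.
Qed.

Lemma doubling_graph_fun X G : doubling_graph X G ->
  exists F, embedding [set p : bool * T | rng G p.2] (rng G) F.
Proof.
move=> [_ G_tot _ G_inj].
have [F FG] : exists F, forall p, rng G p.2 -> G (p, F p).
  by apply: (graph_fun t0 (X := [set p : bool * T | rng G p.2])) => -[b x]; exact: G_tot.
exists F; split=> [p /FG Gp|p p' /FG Gp /FG Gp' Fpp']; first by exists p.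
by rewrite Fpp' in Gp; exact: G_inj Gp Gp'.
Qed.

(* Writing [X] as [P + (X \ P)], both halves go injectively into [P], and the
   two copies of [P] are then separated by [F]. *)
Lemma embedding_double_cover (X P : set T) F psi : P `<=` X ->
  embedding [set p : bool * T | P p.2] P F -> embedding (X `\` P) P psi ->
  exists d : bool * T -> T, embedding [set p | X p.2] X d.
Proof.
move=> PX [F_P F_inj] [psiP psi_inj].
pose iota x := if pselect (P x) then F (false, x) else F (true, psi x).
have psiP' y : X y -> ~ P y -> P (psi y) by move=> Xy nPy; exact: psiP.
have iota_P x : X x -> P (iota x).
  by move=> Xx; rewrite /iota; case: pselect => [Px|nPx]; apply: F_P => //=; exact: psiP'.
have iota_inj x x' : X x -> X x' -> iota x = iota x' -> x = x'.
  move=> Xx Xx'; rewrite /iota; case: pselect => [Px|nPx]; case: pselect => [Px'|nPx'] /=.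
  - by move=> /(F_inj (false, x) (false, x') Px Px') [].
  - by move=> /(F_inj (false, x) (true, psi x') Px (psiP' _ Xx' nPx')).
  - by move=> /(F_inj (true, psi x) (false, x') (psiP' _ Xx nPx) Px').
  move=> /(F_inj (true, psi x) (true, psi x') (psiP' _ Xx nPx) (psiP' _ Xx' nPx')) [].
  by apply: psi_inj; split.
exists (fun p => F (p.1, iota p.2)); split=> [[b x] /= Xx|[b x] [b' x'] /= Xx Xx'].
  exact/PX/F_P/iota_P.
by move=> /(F_inj (b, iota x) (b', iota x') (iota_P _ Xx) (iota_P _ Xx')) [-> /iota_inj ->].
Qed.

(* A maximal doubling graph leaves no room for a disjoint copy of its range (or of
   [nat], if the range is empty), so the rest of [X] embeds into its range. *)
Lemma doubling (X : set T) : infinite_set X ->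
  exists d : bool * T -> T, embedding [set p | X p.2] X d.
Proof.
move=> /infinite_setP [h [h_inj hX]].
have [G [dG Gmax]] := maximal_doubling_graph X; pose P := rng G.
have PX : P `<=` X by have [G_dom _ _ _] := dG; move=> y [[b x] /G_dom []].
have [F F_emb] := doubling_graph_fun dG.
have [[phi [phiX phi_inj]]|[psi psi_emb]] := embedding_total t0 P (X `\` P); last first.
  exact: embedding_double_cover PX F_emb psi_emb.
exfalso; have [[y0 [[b x] Gy0]]|P0] := pselect (P !=set0).
  have phi_emb : embedding P X phi by split=> // y /phiX [].
  set H := [set q | exists b x y, G ((b, x), y) /\ q = ((b, phi x), phi y)].
  have dH : doubling_graph X H := doubling_graph_image dG phi_emb.
  have H0 : rng H !=set0 by exists (phi y0), (b, phi x), b, x, y0.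
  have [z [Pz [_ [b' [x' [y [Gy [_ ez]]]]]]]] := maximal_doubling_graph_meet dG Gmax dH H0.
  by apply: (phiX y _).2; [exists (b', x') | rewrite -ez].
set H := [set q | exists (b : bool) n, q = ((b, h n), h (n.*2 + b)%N)].
have dH : doubling_graph X H := doubling_graph_nat h_inj hX.
have H0 : rng H !=set0 by exists (h 0%N), (false, h 0%N), false, 0%N.
have [z [Pz _]] := maximal_doubling_graph_meet dG Gmax dH H0.
by apply: P0; exists z.
Qed.

End Doubling.

Lemma embedding_setT_setU (T : Type) (X1 X2 : set T) (phi : T -> T) :
  infinite_set [set: T] -> X1 `|` X2 = setT -> embedding X1 X2 phi ->
  exists f, embedding [set: T] X2 f.
Proof.
move=> Tinf X12 [phiX2 phi_inj]; have [t0 _] := infinite_setN0 Tinf.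
have X2inf : infinite_set X2.
  move: Tinf; rewrite -X12 finite_setU => /not_andP [|//].
  move=> /infinite_setP [h [h_inj hX1]]; apply/infinite_setP; exists (phi \o h).
  by split=> [i j /(phi_inj _ _ (hX1 i) (hX1 j)) /h_inj|n] //; exact/phiX2.
have [d d_emb] := doubling t0 X2inf.
pose iota x := if pselect (X1 x) then (false, phi x) else (true, x).
suff iota_emb : embedding [set: T] [set p | X2 p.2] iota.
  by exists (d \o iota); exact: embedding_comp iota_emb d_emb.
split=> [x _|x y _ _]; rewrite /iota.
  case: pselect => [X1x|nX1x] /=; first exact: phiX2.
  have : (X1 `|` X2) x by rewrite X12.
  by case=> // /nX1x.
by case: pselect => [X1x|nX1x]; case: pselect => [X1y|nX1y] //= [] //; exact: phi_inj.
Qed.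

Lemma small_setU (M K : Type) (A B : set M) :
  infinite_set [set: K] -> small K A -> small K B -> small K (A `|` B).
Proof.
move=> Kinf [[fA fA_inj] nA] [[fB fB_inj] nB]; have [k0 _] := infinite_setN0 Kinf.
have [d [_ d_inj]] := doubling k0 Kinf; split.
  exists (fun x => if pselect (A x) then d (false, fA x) else d (true, fB x)).
  move=> x y ABx ABy; case: pselect => [Ax|nAx]; case: pselect => [Ay|nAy].
  - by move=> /(d_inj _ _ I I) [/(fA_inj _ _ Ax Ay)].
  - by move=> /(d_inj _ _ I I).
  - by move=> /(d_inj _ _ I I).
  move=> /(d_inj _ _ I I) [/fB_inj]; apply; by [case: ABx | case: ABy].
move=> [g [g_inj gAB]].
have embeds_into (X1 X2 : set K) (Y : set M) phi : X1 `|` X2 = setT ->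
    embedding X1 X2 phi -> (forall k, X2 k -> Y (g k)) ->
    exists f : K -> M, injective f /\ forall k, Y (f k).
  move=> X12 phi_emb X2Y; have [f [fX2 f_inj]] := embedding_setT_setU Kinf X12 phi_emb.
  by exists (g \o f); split=> [k k' /g_inj /f_inj|k]; [apply | exact/X2Y/fX2].
pose K1 := [set k | A (g k)].
have [[phi phi_emb]|[psi psi_emb]] := embedding_total k0 K1 (~` K1).
  apply: nB; apply: embeds_into (setUv K1) phi_emb _ => k nAk.
  by case: (gAB k).
by apply: nA; apply: embeds_into (setvU K1) psi_emb _.
Qed.

End Cardinals.

Theorem proposition4p8 (L : language) (M : Type) (I : interp L M) (K : Type)
    (R : realType) (n k : nat)
    (mu : set ('I_n -> M) -> R) (nu : set ('I_k -> M) -> R) :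
  monster I K ->
  fa_prob I setT mu -> fa_prob I setT nu ->
  geE I K mu nu -> smooth I K mu -> smooth I K nu.
Proof.
move=> [[x0] [[g g_inj] _]] fa_mu fa_nu [A [smallA [lam [fa_lam [lam_mu lam_nu]]]]].
move=> [B [smallB [_ mu_smooth]]].
have [om1 [fa_om1 om1_lam om1_mu]] :=
  fa_prob_extend_restr x0 (@lshift_inj n k) fa_lam fa_mu lam_mu.
have om1_nu : agree I setT (piy om1) nu by exact: lam_nu.
have A_AB : A `<=` A `|` B by move=> a; left.
have B_AB : B `<=` A `|` B by move=> b; right.
exists (A `|` B); split; first by apply: small_setU => //; apply/infinite_setP; exists g.
split=> // nu' fa_nu' nu'_nu.
have om1_nu' : agree I (A `|` B) (piy om1) nu'.
  by move=> D dD; rewrite nu'_nu //; apply: om1_nu; exact: definable_mono (subsetT _) dD.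
have [om [fa_om om_om1 om_nu']] :=
  fa_prob_extend_restr x0 (@rshift_inj n k) (fa_prob_sub (subsetT _) fa_om1) fa_nu' om1_nu'.
have om_mu : agree I setT (pix om) mu.
  apply: mu_smooth; first exact: fa_prob_restr.
  move=> D dD; rewrite /pix om_om1; last exact/definable_restr_preimage/(definable_mono B_AB).
  exact: om1_mu (definable_mono (subsetT _) dD).
have om_nu : agree I setT (piy om) nu.
  apply: lam_nu => // X dX; rewrite om_om1 ?om1_lam //; exact: definable_mono A_AB dX.
by move=> D dD; rewrite -(om_nu D dD) -(om_nu' D dD).
Qed.
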